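(* Consider an instance of the destructive weighted-\$-protection problem and let $\mathcal{V}_F\subseteq\mathcal{V}$ be a set of awarded voters. Suppose the attacker succeeds (i.e., makes some candidate $c\neq c_m$ obtain a total score strictly higher than $c_m$) by bribing a set $\mathcal{V}_B\subseteq\mathcal{V}\setminus\mathcal{V}_F$ with $\sum_{v_j\in\mathcal{V}_B}p_j^b\le B$. If $v_{j'}\prec v_j$, $v_{j'}\in\mathcal{V}_B$ and $v_j\notin\mathcal{V}_F\cup\mathcal{V}_B$, then the attacker can also succeed by bribing $(\mathcal{V}_B\setminus\{v_{j'}\})\cup\{v_j\}$ (within budget $B$).
   Context: Election model. Candidates $\mathcal{C}=\{c_1,\dots,c_m\}$, voters $\mathcal{V}=\{v_1,\dots,v_n\}$; voter $v_j$ has a preference list $\tau_j$ (a linear order of $\mathcal{C}$), weight $w_j\in\mathbb{Z}_{>0}$, awarding price $p_j^a\in\mathbb{Z}_{>0}$, bribing price $p_j^b\in\mathbb{Z}_{>0}$. A scoring rule $\alpha=(\alpha_1\ge\cdots\ge\alpha_m)$ of nonnegative integers gives the candidate at position $z$ of $v_j$'s list $w_j\alpha_z$ points; total score is the sum over voters. In the destructive weighted-\$-protection problem, $c_m$ has maximum total score without bribery; there is a defense budget $F$ and an attack budget $B$; the attacker may choose $\mathcal{V}_B\subseteq\mathcal{V}\setminus\mathcal{V}_F$ with total bribing price at most $B$ and replace each list in $\mathcal{V}_B$ by an arbitrary list; it succeeds if some $c\neq c_m$ gets a strictly higher total score than $c_m$. Dominance: $v_{j'}\prec v_j$ ($v_j$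 dominates $v_{j'}$) if either (i) $\tau_j=\tau_{j'}$, $w_j\ge w_{j'}$, $p_j^a\le p_{j'}^a$, $p_j^b\le p_{j'}^b$ with at least one of these three inequalities strict; or (ii) $\tau_j=\tau_{j'}$, $w_j=w_{j'}$, $p_j^a=p_{j'}^a$, $p_j^b=p_{j'}^b$ and $j'<j$. *)

From mathcomp Require Import all_boot all_order all_fingroup.
Set Implicit Arguments. Unset Strict Implicit. Unset Printing Implicit Defensive.

(* Candidates: 'I_m.+1 (c_1..c_m are ordinals 0..m-1; c_m is ord_max).  A preference list of a voter is a permutation
   tau : {perm 'I_m.+1} where tau z is the candidate at position z
   (position 0 = top). *)

Definition profile (m n : nat) := 'I_n -> {perm 'I_m.+1}.

Definition score (m n : nat) (alpha : 'I_m.+1 -> nat) (w : 'I_n -> nat)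
    (tau : profile m n) (c : 'I_m.+1) : nat :=
  \sum_(j < n) w j * alpha (((tau j)^-1)%g c).

Definition scoring_rule (m : nat) (alpha : 'I_m.+1 -> nat) : Prop :=
  forall z1 z2 : 'I_m.+1, (z1 <= z2)%N -> (alpha z2 <= alpha z1)%N.

Definition attack_succeeds (m n : nat) (alpha : 'I_m.+1 -> nat)
    (w pb : 'I_n -> nat) (tau : profile m n) (B : nat)
    (VF VB : {set 'I_n}) : Prop :=
  [disjoint VB & VF] /\
  (\sum_(j in VB) pb j <= B)%N /\
  exists tau' : profile m n,
    (forall j, j \notin VB -> tau' j = tau j) /\
    exists c : 'I_m.+1, c != ord_max /\
      (score alpha w tau' ord_max < score alpha w tau' c)%N.

Definition dominated (m n : nat) (tau : profile m n) (w pa pb : 'I_n -> nat)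
    (j' j : 'I_n) : Prop :=
  (tau j = tau j' /\ (w j' <= w j)%N /\ (pa j <= pa j')%N /\ (pb j <= pb j')%N
     /\ ((w j' < w j)%N \/ (pa j < pa j')%N \/ (pb j < pb j')%N))
  \/
  (tau j = tau j' /\ w j = w j' /\ pa j = pa j' /\ pb j = pb j' /\ (j' < j)%N).

(* The new attack keeps every bribed ballot except that v_j' returns to its
   honest list (which is also the list of v_j) and v_j casts a ballot with c
   first and c_m last.  The margin of c over c_m is a sum over voters of the
   weight times a gap, and the gap is largest for the ballot now cast by v_j;
   since v_j is at least as heavy as v_j', the exchange cannot lower the
   margin, and since v_j is at most as expensive, it stays within budget. *)

From mathcomp Require Import all_boot all_order all_fingroup all_algebra.
From mathcomp Require Import zify.

Set Implicit Arguments.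
Unset Strict Implicit.
Unset Printing Implicit Defensive.

Import Order.TTheory GRing.Theory Num.Theory.

Lemma dominatedE (m n : nat) (tau : profile m n) (w pa pb : 'I_n -> nat)
    (j' j : 'I_n) :
  dominated tau w pa pb j' j ->
  [/\ tau j = tau j', (w j' <= w j)%N & (pb j <= pb j')%N].
Proof.
by case=> [[-> [? [_ [? _]]]] | [-> [-> [_ [-> _]]]]].
Qed.

Section Exchange.

Variables (T : finType) (j' j : T) (VB : {set T}).
Hypotheses (j'_in : j' \in VB) (j_notin : j \notin VB).

Lemma exchange_disjoint (VF : {set T}) :
  [disjoint VB & VF] -> j \notin VF -> [disjoint (VB :\ j') :|: [set j] & VF].
Proof.
move=> VB_VF j_VF; rewrite -setI_eq0 setIUl setU_eq0 !setI_eq0 disjoints1 j_VF.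
by rewrite andbT; apply: disjointWl VB_VF; apply: subD1set.
Qed.

Lemma big_exchange (p : T -> nat) :
  (\sum_(k in (VB :\ j') :|: [set j]) p k + p j'
     = \sum_(k in VB) p k + p j)%N.
Proof.
rewrite setUC big_setU1 /=; last by rewrite in_setD1 (negPf j_notin) andbF.
by rewrite (big_setD1 j' j'_in) /=; lia.
Qed.

End Exchange.

Lemma sumrB_agree_off2 (I : finType) (V : zmodType) (f g : I -> V) (a b : I) :
  a != b -> (forall k, k != a -> k != b -> f k = g k) ->
  (\sum_k f k - \sum_k g k = (f a - g a) + (f b - g b))%R.
Proof.
move=> ab fg; rewrite -sumrB (bigD1 a) // (bigD1 b) 1?eq_sym //= big1 ?addr0 //.
by move=> k /andP [ka kb]; rewrite fg ?subrr.
Qed.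

Lemma exchange_gain (a b x y z : int) :
  (0 <= a)%R -> (a <= b)%R -> (y <= x)%R -> (z <= x)%R ->
  (0 <= b * (x - y) + a * (y - z))%R.
Proof. nia. Qed.

Section Margin.

Variables (m n : nat) (alpha : 'I_m.+1 -> nat) (w : 'I_n -> nat).
Hypothesis alpha_rule : scoring_rule alpha.

Local Open Scope ring_scope.

Definition gap (sigma : {perm 'I_m.+1}) (c : 'I_m.+1) : int :=
  (alpha ((sigma^-1)%g c))%:Z - (alpha ((sigma^-1)%g ord_max))%:Z.

Definition margin (tau : profile m n) (c : 'I_m.+1) : int :=
  \sum_k (w k)%:Z * gap (tau k) c.

Lemma marginE tau c :
  margin tau c = (score alpha w tau c)%:Z - (score alpha w tau ord_max)%:Z.
Proof.
rewrite /margin /score -!natz !natr_sum -sumrB; apply: eq_bigr => k _.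
by rewrite mulrBr !natrM !natz.
Qed.

Definition favour (c : 'I_m.+1) : {perm 'I_m.+1} := tperm ord0 c.

Lemma gap_le_favour sigma c : c != ord_max -> gap sigma c <= gap (favour c) c.
Proof.
move=> c_max; have ord0_max : ord0 != ord_max :> 'I_m.+1.
  by apply: contra c_max; rewrite -!val_eqE /=; move: (ltn_ord c); lia.
rewrite /gap /favour tpermV tpermR tpermD // lerB ?lez_nat //.
all: by apply: alpha_rule => //; apply: leq_ord.
Qed.

Lemma margin_favour_exchange (tau1 tau2 : profile m n) (j j' : 'I_n) c :
  c != ord_max -> j != j' -> (w j' <= w j)%N ->
  tau2 j = favour c -> tau2 j' = tau1 j ->
  (forall k, k != j -> k != j' -> tau2 k = tau1 k) ->
  margin tau1 c <= margin tau2 c.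
Proof.
move=> c_max jj' w_jj' tau2_j tau2_j' tau12; rewrite -subr_ge0.
rewrite (sumrB_agree_off2 jj') => [|k kj kj']; last by rewrite tau12.
rewrite tau2_j tau2_j' -!mulrBr.
by apply: exchange_gain; rewrite ?lez_nat // gap_le_favour.
Qed.

End Margin.

Theorem lemma5 (m n : nat) (alpha : 'I_m.+1 -> nat) (tau : profile m n)
    (w pa pb : 'I_n -> nat) (F B : nat) (VF VB : {set 'I_n}) (j' j : 'I_n) :
  scoring_rule alpha ->
  (forall k, 0 < w k)%N -> (forall k, 0 < pa k)%N -> (forall k, 0 < pb k)%N ->
  (forall c, score alpha w tau c <= score alpha w tau ord_max)%N ->
  (\sum_(k in VF) pa k <= F)%N ->
  attack_succeeds alpha w pb tau B VF VB ->
  dominated tau w pa pb j' j ->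
  j' \in VB ->
  j \notin VF :|: VB ->
  attack_succeeds alpha w pb tau B VF ((VB :\ j') :|: [set j]).
Proof.
move=> alpha_rule _ _ _ _ _ [VB_VF [budget [tau' [tau'_out [c [c_max win]]]]]].
move=> /dominatedE [tau_jj' w_jj' pb_jj'] j'_VB.
rewrite in_setU negb_or => /andP [j_VF j_VB].
have jj' : j != j' by apply: contraNneq j_VB => ->.
split; first exact: exchange_disjoint.
split.
  by rewrite -(leq_add2r (pb j')) big_exchange //; apply: leq_add.
pose tau'' : profile m n :=
  fun k => if k == j then favour c else if k == j' then tau j' else tau' k.
exists tau''; split.
  move=> k; rewrite /tau'' !inE negb_or negb_and negbK => /andP [+ /negPf ->].
  by case: eqP => [-> | _] /= k_VB //; rewrite tau'_out.
exists c; split => //.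
rewrite -ltz_nat -subr_gt0 -!marginE.
apply: (lt_le_trans _ (margin_favour_exchange (tau1 := tau') alpha_rule
                        c_max jj' w_jj' _ _ _)).
- by rewrite marginE subr_gt0 ltz_nat.
- by rewrite /tau'' eqxx.
- by rewrite /tau'' eq_sym (negPf jj') eqxx tau'_out.
- by move=> k kj kj'; rewrite /tau'' (negPf kj) (negPf kj').
Qed.
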